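(* Let $G$ be a compact Hausdorff topological group and $X$ a $G$-connected Hausdorff $G$-space. If $H=G_z$ is the isotropy group of some point $z\in X$, then $\mathrm{cat}_H(X)\le\mathbf{TC}_G(X)$.
   Context: $G_z=\{g\in G: gz=z\}$. $X$ is $G$-connected if $X^K=\{x: kx=x\ \forall k\in K\}$ is path-connected for every closed subgroup $K$. For a compact group $\Gamma$ acting on $Y$: a $\Gamma$-homotopy is an equivariant homotopy with trivial action on $I$; an invariant set is $\Gamma$-categorical if its inclusion is $\Gamma$-homotopic to a map into a single $\Gamma$-orbit; $\mathrm{cat}_\Gamma(Y)$ is the least number of open $\Gamma$-categorical sets covering $Y$. $\mathbf{TC}_G(X)$ is the least $k$ such that $X\times X$ (diagonal action) is covered by $k$ $G$-invariant open sets $U_i$ each admitting a $G$-map $s\colon U_i\to X^I$ with $\pi s$ $G$-homotopic to the inclusion ($\infty$ if none); $X^I$ is the path space (compact-open topology, action $(g\gamma)(t)=g\gamma(t)$), $\pi(\gamma)=(\gamma(0),\gamma(1))$. *)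

From HB Require Import structures.
From mathcomp Require Import all_boot all_order all_algebra.
From mathcomp Require Import all_classical all_reals.
From mathcomp Require Import topology ereal normedtype.
Import numFieldNormedType.Exports.
Set Implicit Arguments. Unset Strict Implicit. Unset Printing Implicit Defensive.
Import Order.TTheory GRing.Theory Num.Theory.
Local Open Scope classical_set_scope.
Local Open Scope ring_scope.

Record topGroup (G : topologicalType) := TopGroup {
  gmul : G -> G -> G;
  ginv : G -> G;
  gone : G;
  gmulA : forall a b c, gmul a (gmul b c) = gmul (gmul a b) c;
  gmul1 : forall a, gmul gone a = a;
  gmulV : forall a, gmul (ginv a) a = gone;
  gmul_cont : continuous (fun p : G * G => gmul p.1 p.2);
  ginv_cont : continuous ginv }.

Record gaction (G : topologicalType) (gG : topGroup G) (X : topologicalType) :=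
  GAction {
  act : G -> X -> X;
  act1 : forall x, act (gone gG) x = x;
  actM : forall g h x, act (gmul gG g h) x = act g (act h x);
  act_cont : continuous (fun p : G * X => act p.1 p.2) }.

Notation unit_interval R := (set_type (`[0, 1]%classic : set R)).

Section Defs.
Context {R : realType} {G X : topologicalType} {gG : topGroup G}
  (A : gaction gG X).
Local Notation unit_interval := (unit_interval R).

Lemma in01_0 : (0:R) \in (`[0, 1]%classic : set R).
Proof. by apply/mem_set; rewrite /= in_itv /= lexx ler01. Qed.
Lemma in01_1 : (1:R) \in (`[0, 1]%classic : set R).
Proof. by apply/mem_set; rewrite /= in_itv /= lexx ler01. Qed.

Definition i0 : unit_interval := exist _ 0 in01_0.
Definition i1 : unit_interval := exist _ 1 in01_1.

Definition closed_subgroup (K : set G) : Prop :=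
  [/\ closed K, K (gone gG),
      (forall a b, K a -> K b -> K (gmul gG a b)) &
      (forall a, K a -> K (ginv gG a))].

Definition isotropy (z : X) : set G := [set g | act A g z = z].

Definition fixed_set (K : set G) : set X :=
  [set x | forall k, K k -> act A k x = x].

Definition path_connected_set (S : set X) : Prop :=
  forall x y, S x -> S y ->
    exists gam : unit_interval -> X,
      [/\ continuous gam, gam i0 = x, gam i1 = y & forall t, S (gam t)].

Definition G_connected : Prop :=
  forall K, closed_subgroup K -> path_connected_set (fixed_set K).

Definition invariant (K : set G) (U : set X) : Prop :=
  forall k x, K k -> U x -> U (act A k x).

(** U is K-categorical: the inclusion U -> X is K-homotopic (an equivariant
    homotopy, trivial action on I) to a map into a single K-orbit. *)
Definition categorical (K : set G) (U : set X) : Prop :=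
  exists F : X -> unit_interval -> X,
    [/\ {within U `*` setT, continuous (fun p : X * unit_interval => F p.1 p.2)},
        (forall k x t, K k -> U x -> F (act A k x) t = act A k (F x t)),
        (forall x, U x -> F x i0 = x) &
        exists x0, forall x, U x -> exists2 k, K k & F x i1 = act A k x0].

(** cat_K(X): least number of open K-invariant K-categorical sets covering X
    (+oo if there is none), as an extended real. *)
Definition cat_cover (K : set G) (n : nat) : Prop :=
  exists U : nat -> set X,
    (forall i, (i < n)%N -> [/\ open (U i), invariant K (U i) & categorical K (U i)])
    /\ forall x, exists2 i, (i < n)%N & U i x.

Definition eqcat (K : set G) : \bar R :=
  ereal_inf [set (n%:R)%:E | n in cat_cover K].

Definition dact (g : G) (p : X * X) : X * X := (act A g p.1, act A g p.2).

(** A G-invariant open U in X * X admits an equivariant motion planner: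
    a G-map s : U -> X^I (X^I = continuous paths, compact-open topology,
    action pointwise) such that pi o s is G-homotopic to the inclusion. *)
Definition eq_motion_planner (U : set (X * X)) : Prop :=
  exists s : X * X -> unit_interval -> X,
    [/\ (forall p, U p -> continuous (s p)),
        {within U, continuous (s : X * X -> {compact-open, unit_interval -> X})},
        (forall g p t, U p -> s (dact g p) t = act A g (s p t)) &
        exists F : X * X -> unit_interval -> X * X,
        [/\ {within U `*` setT,
              continuous (fun q : (X * X) * unit_interval => F q.1 q.2)},
            (forall g p t, U p -> F (dact g p) t = dact g (F p t)),
            (forall p, U p -> F p i0 = (s p i0, s p i1)) &
            (forall p, U p -> F p i1 = p)]].

Definition tc_cover (n : nat) : Prop :=
  exists U : nat -> set (X * X),
    (forall i, (i < n)%N ->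
       [/\ open (U i), (forall g p, U i p -> U i (dact g p)) &
           eq_motion_planner (U i)])
    /\ forall p, exists2 i, (i < n)%N & U i p.

(** Equivariant topological complexity TC_G(X) (+oo if no such cover). *)
Definition eqTC : \bar R := ereal_inf [set (n%:R)%:E | n in tc_cover].

End Defs.

(** Slice an equivariant motion planner (s, F) on an open set U of X * X at
    the base point z. For x with (z, x) in U, run from x back along the
    second coordinate of F(z, x) to s(z, x)(1), backwards along the planned
    path to s(z, x)(0), then along the first coordinate of F(z, x) to z.
    This deforms the slice {x | (z, x) in U} into the orbit of z, and it
    commutes with every k in G_z because (z, k x) = k (z, x). Hence a
    TC_G-cover of X * X slices into a G_z-categorical cover of X of the same
    size. *)

From Pilot Require Import Defs.
From HB Require Import structures.
From mathcomp Require Import all_boot all_order all_algebra.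
From mathcomp Require Import all_classical all_reals.
From mathcomp Require Import topology ereal normedtype lra.
Import numFieldNormedType.Exports.
Import Order.TTheory GRing.Theory Num.Theory.
Local Open Scope classical_set_scope.
Local Open Scope ring_scope.

Lemma continuous_pair {T U V : topologicalType} (f : T -> U) (g : T -> V) :
  continuous f -> continuous g -> continuous (fun x => (f x, g x)).
Proof.
move=> cf cg x; apply: (@cvg_pair _ _ _ (nbhs x) (nbhs (f x)) (nbhs (g x))).
- exact: cf.
- exact: cg.
Qed.

Lemma within_continuous_precomp {T1 T2 T3 : topologicalType}
    {A : set T1} {B : set T2} (g : T1 -> T2) {f : T2 -> T3} :
  continuous g -> (forall x, A x -> B (g x)) -> {within B, continuous f} ->
  {within A, continuous (f \o g)}.
Proof.
move=> cg AB /subspace_continuousP cf; apply/subspace_continuousP => x Ax.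
apply: (cvg_comp _ _ _ (cf _ (AB _ Ax))) => W /=; rewrite nbhs_simpl /=.
by move=> /(cg x); rewrite nbhs_simpl /=; apply: filterS => y Wy /AB.
Qed.

Lemma withinIU_continuous {T U : topologicalType} (D A B : set T) (f : T -> U) :
  closed A -> closed B ->
  {within D `&` A, continuous f} -> {within D `&` B, continuous f} ->
  {within D `&` (A `|` B), continuous f}.
Proof.
move=> cA cB ctsA ctsB; apply/continuous_closedP => W cW.
case/continuous_closedP/(_ _ cW)/closed_subspaceP: ctsA => V1 cV1 V1W.
case/continuous_closedP/(_ _ cW)/closed_subspaceP: ctsB => V2 cV2 V2W.
apply/closed_subspaceP; exists ((V1 `&` A) `|` (V2 `&` B)).
  by apply: closedU; exact: closedI.
apply/seteqP; split => x [+ [Dx ABx]].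
- case=> -[Vx Ax]; split=> //.
  + by have [] : (f @^-1` W `&` (D `&` A)) x by rewrite -V1W.
  + by have [] : (f @^-1` W `&` (D `&` B)) x by rewrite -V2W.
- move=> Wx; split=> //; case: ABx => [Ax|Bx]; [left|right].
  + by have [] : (V1 `&` (D `&` A)) x by rewrite V1W.
  + by have [] : (V2 `&` (D `&` B)) x by rewrite V2W.
Qed.

(* Continuity into the compact-open topology only controls s on compact
   sets; regularity of V lets us pass to a closed, hence compact,
   neighbourhood of the time parameter. *)
Lemma within_continuous_uncurry {P V Y : topologicalType} (U : set P)
    (s : P -> V -> Y) :
  compact [set: V] -> @regular_space V ->
  (forall p, U p -> continuous (s p)) ->
  {within U, continuous (s : P -> {compact-open, V -> Y})} ->
  {within U `*` setT, continuous (fun q : P * V => s q.1 q.2)}.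
Proof.
move=> cptV regV cs /subspace_continuousP cU.
apply/subspace_continuousP => -[p t] /= [Up _] D /=.
rewrite nbhsE => -[O [oO Ost]] /filterS; apply.
have [N Nt NO] : exists2 N, nbhs t N & closure N `<=` s p @^-1` O.
  have Ot : nbhs t (s p @^-1` O).
    by apply: (cs p Up t); exact: open_nbhs_nbhs.
  by have [N ? ?] := regV t _ Ot; exists N.
pose W := [set g : {compact-open, V -> Y} | g @` closure N `<=` O].
have oW : open W.
  apply: compact_open_open => //.
  by apply: (subclosed_compact _ cptV) => //; exact: closed_closure.
have Wsp : W (s p) by move=> _ [u /NO Ou <-].
exists ((fun q => U q -> W (s q)), N).
  by split=> //; apply: (cU p Up W); exact: open_nbhs_nbhs.
case=> a b /= [Wa Nb] [Ua _]; apply: (Wa Ua).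
by exists b => //; exact: subset_closure.
Qed.

Section unit_interval.
Context {R : realType}.
Local Notation I := (unit_interval R).

Lemma clamp01_in (r : R) :
  Num.min 1 (Num.max 0 r) \in (`[0, 1]%classic : set R).
Proof.
apply/mem_set; rewrite /= in_itv /=; apply/andP; split.
  by rewrite le_min ler01 le_max lexx.
by rewrite ge_min lexx.
Qed.

Definition clamp01 (r : R) : I :=
  exist _ (Num.min 1 (Num.max 0 r)) (clamp01_in r).

Lemma clamp01_continuous : continuous clamp01.
Proof.
apply: (@continuous_comp_initial _ _ _ set_val) => x /=.
apply: (@continuous_min R R (fun=> 1) (Num.max 0)); first exact: cvg_cst.
by apply: (@continuous_max R R (fun=> 0) id); [exact: cvg_cst | exact: cvg_id].
Qed.

Lemma clamp01_val (t : I) : clamp01 (val t) = t.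
Proof.
case: t => r r01; apply: val_inj => /=.
move/set_mem: (r01); rewrite /= in_itv /= => /andP[r0 r1].
by rewrite max_r // min_r.
Qed.

Lemma clamp01_0 : clamp01 0 = i0.
Proof. exact: (clamp01_val i0). Qed.

Lemma clamp01_1 : clamp01 1 = i1.
Proof. exact: (clamp01_val i1). Qed.

Lemma val_unit_interval_continuous : continuous (val : I -> R).
Proof. exact: initial_continuous. Qed.

Lemma unit_interval_compact : compact [set: I].
Proof.
have -> : [set: I] = clamp01 @` `[0, 1].
  apply/seteqP; split => // t _; exists (val t); last exact: clamp01_val.
  by move/set_mem: (valP t).
apply: continuous_compact; last exact: segment_compact.
exact/continuous_subspaceT/clamp01_continuous.
Qed.

End unit_interval.

Section homotopy.
Context {R : realType}.
Local Notation I := (unit_interval R).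

Definition continuous_homotopy_on {Y Z : topologicalType} (D : set Y)
    (h : Y -> I -> Z) :=
  {within D `*` setT, continuous (fun q : Y * I => h q.1 q.2)}.

Lemma continuous_homotopy_on_precomp {Y Y' Z : topologicalType} (D : set Y)
    (D' : set Y') (e : Y' -> Y) (h : Y -> I -> Z) :
  continuous e -> (forall y, D' y -> D (e y)) -> continuous_homotopy_on D h ->
  continuous_homotopy_on D' (fun y => h (e y)).
Proof.
move=> ce eD ch.
have ceI : continuous (fun q : Y' * I => (e q.1, q.2)).
  apply: continuous_pair => q; last exact: cvg_snd.
  by apply: continuous_comp; [exact: cvg_fst | exact: ce].
by apply: (within_continuous_precomp _ ceI _ ch) => q [/eD].
Qed.

Lemma continuous_homotopy_on_comp {Y Z Z' : topologicalType} (D : set Y)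
    (g : Z -> Z') (h : Y -> I -> Z) :
  continuous g -> continuous_homotopy_on D h ->
  continuous_homotopy_on D (fun y t => g (h y t)).
Proof. by move=> cg ch; apply: within_continuous_comp ch => ? _; exact: cg. Qed.

Lemma continuous_homotopy_on_reparam {Y Z : topologicalType} (D : set Y)
    (phi : R -> R) (h : Y -> I -> Z) :
  continuous phi -> continuous_homotopy_on D h ->
  continuous_homotopy_on D (fun y t => h y (clamp01 (phi (val t)))).
Proof.
move=> cphi ch.
have cg : continuous (fun q : Y * I => (q.1, clamp01 (phi (val q.2)))).
  apply: continuous_pair => q; first exact: cvg_fst.
  apply: (@continuous_comp _ _ _ snd (fun t : I => clamp01 (phi (val t)))).
    exact: cvg_snd.
  apply: (@continuous_comp _ _ _ _ (clamp01 \o phi) _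
    (val_unit_interval_continuous _)).
  exact: continuous_comp (cphi _) (clamp01_continuous _).
by apply: (within_continuous_precomp _ cg _ ch) => q [].
Qed.

Definition homotopy_rev {Y Z : Type} (h : Y -> I -> Z) (y : Y) (t : I) : Z :=
  h y (clamp01 (1 - val t)).

Definition homotopy_cat {Y Z : Type} (h1 h2 : Y -> I -> Z) (y : Y) (t : I) :
    Z :=
  if 2 * val t <= 1 then h1 y (clamp01 (2 * val t))
  else h2 y (clamp01 (2 * val t - 1)).

Lemma homotopy_rev0 {Y Z : Type} (h : Y -> I -> Z) y :
  homotopy_rev h y i0 = h y i1.
Proof. by rewrite /homotopy_rev /= subr0 clamp01_1. Qed.

Lemma homotopy_rev1 {Y Z : Type} (h : Y -> I -> Z) y :
  homotopy_rev h y i1 = h y i0.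
Proof. by rewrite /homotopy_rev /= subrr clamp01_0. Qed.

Lemma homotopy_cat0 {Y Z : Type} (h1 h2 : Y -> I -> Z) y :
  homotopy_cat h1 h2 y i0 = h1 y i0.
Proof. by rewrite /homotopy_cat /= mulr0 ler01 clamp01_0. Qed.

Lemma homotopy_cat1 {Y Z : Type} (h1 h2 : Y -> I -> Z) y :
  homotopy_cat h1 h2 y i1 = h2 y i1.
Proof.
rewrite /homotopy_cat /= mulr1.
have -> : (2 <= 1 :> R) = false by apply/negbTE; rewrite -ltNge; lra.
have -> : 2 - 1 = 1 :> R by lra.
by rewrite clamp01_1.
Qed.

Lemma continuous_homotopy_on_rev {Y Z : topologicalType} (D : set Y)
    (h : Y -> I -> Z) :
  continuous_homotopy_on D h -> continuous_homotopy_on D (homotopy_rev h).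
Proof.
move=> ch.
apply: (continuous_homotopy_on_reparam _ (fun r : R => 1 - r) _ _ ch).
by move=> r; apply: cvgB; [exact: cvg_cst | exact: cvg_id].
Qed.

Lemma continuous_homotopy_on_cat {Y Z : topologicalType} (D : set Y)
    (h1 h2 : Y -> I -> Z) :
  (forall y, D y -> h1 y i1 = h2 y i0) ->
  continuous_homotopy_on D h1 -> continuous_homotopy_on D h2 ->
  continuous_homotopy_on D (homotopy_cat h1 h2).
Proof.
move=> h12 ch1 ch2; pose r (q : Y * I) := 2 * val q.2.
have cr : continuous r.
  move=> q; apply: cvgM; first exact: cvg_cst.
  apply: (@continuous_comp _ _ _ snd (fun t : I => val t)).
    exact: cvg_snd.
  exact: val_unit_interval_continuous.
have clr := proj1 (continuous_closedP r) cr.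
rewrite /continuous_homotopy_on.
have -> : D `*` setT =
    D `*` setT `&` ([set q | r q <= 1] `|` [set q | 1 <= r q]).
  apply/seteqP; split => [q Dq|q []//]; split => //.
  by case: (lerP (r q) 1) => [|/ltW]; [left|right].
apply: withinIU_continuous.
- exact: clr (@closed_le _ _).
- exact: clr (@closed_ge _ _).
- apply: subspace_eq_continuous (continuous_subspaceW (@subIsetl _ _ _)
    (continuous_homotopy_on_reparam _ (fun r : R => 2 * r) _ _ ch1)).
    by move=> q /set_mem [_ r1]; rewrite /from_subspace /homotopy_cat /= ifT.
  by move=> x; apply: cvgM; [exact: cvg_cst | exact: cvg_id].
- apply: subspace_eq_continuous (continuous_subspaceW (@subIsetl _ _ _)
    (continuous_homotopy_on_reparam _ (fun r : R => 2 * r - 1) _ _ ch2)).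
    move=> q /set_mem [[Dq _] r1]; rewrite /from_subspace /homotopy_cat /=.
    case: ifP => // r1'.
    have -> : 2 * val q.2 = 1 by apply/eqP; rewrite eq_le r1 r1'.
    by rewrite subrr clamp01_0 clamp01_1 h12.
  move=> x; apply: cvgB; last exact: cvg_cst.
  by apply: cvgM; [exact: cvg_cst | exact: cvg_id].
Qed.

Lemma homotopy_rev_natural {Y Z : Type} (D : set Y) (a : Y -> Y) (b : Z -> Z)
    (h : Y -> I -> Z) :
  (forall y t, D y -> h (a y) t = b (h y t)) ->
  forall y t, D y -> homotopy_rev h (a y) t = b (homotopy_rev h y t).
Proof. by move=> ha y t Dy; rewrite /homotopy_rev ha. Qed.

Lemma homotopy_cat_natural {Y Z : Type} (D : set Y) (a : Y -> Y) (b : Z -> Z)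
    (h1 h2 : Y -> I -> Z) :
  (forall y t, D y -> h1 (a y) t = b (h1 y t)) ->
  (forall y t, D y -> h2 (a y) t = b (h2 y t)) ->
  forall y t, D y -> homotopy_cat h1 h2 (a y) t = b (homotopy_cat h1 h2 y t).
Proof.
move=> h1a h2a y t Dy; rewrite /homotopy_cat.
by case: ifP => _; [exact: h1a | exact: h2a].
Qed.

End homotopy.

Section slice.
Context {R : realType} {G X : topologicalType} {gG : topGroup G}
  (A : gaction gG X) (z : X).
Local Notation I := (unit_interval R).

Definition slice (U : set (X * X)) : set X := [set x | U (z, x)].

Lemma continuous_pair_z : continuous (fun x : X => (z, x)).
Proof. by apply: continuous_pair => x; [exact: cvg_cst | exact: cvg_id]. Qed.

Lemma open_slice (U : set (X * X)) : open U -> open (slice U).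
Proof. exact: (proj1 (continuousP _) continuous_pair_z). Qed.

(* [invariant] alone would refer to the eqtype predicate of the same name. *)
Lemma slice_invariant (U : set (X * X)) :
  (forall g p, U p -> U (dact A g p)) ->
  Defs.invariant A (isotropy A z) (slice U).
Proof. by move=> invU k x kz /(invU k); rewrite /dact /= kz. Qed.

Definition slice_contraction (s : X * X -> I -> X) (F : X * X -> I -> X * X) :=
  homotopy_cat
    (homotopy_cat (homotopy_rev (fun x t => (F (z, x) t).2))
                  (homotopy_rev (fun x => s (z, x))))
    (fun x t => (F (z, x) t).1).

Lemma slice_categorical (U : set (X * X)) :
  eq_motion_planner (R := R) A U ->
  categorical (R := R) A (isotropy A z) (slice U).
Proof.
move=> [s [cs cs_co s_eq [F [cF F_eq F0 F1]]]].
have cFz : continuous_homotopy_on (slice U) (fun x => F (z, x)).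
  exact: continuous_homotopy_on_precomp continuous_pair_z _ cF.
have csz : continuous_homotopy_on (slice U) (fun x => s (z, x)).
  have csU : continuous_homotopy_on U s := within_continuous_uncurry _ _
    unit_interval_compact uniform_regular cs cs_co.
  exact: continuous_homotopy_on_precomp continuous_pair_z _ csU.
have zk k x : isotropy A z k -> (z, act A k x) = dact A k (z, x).
  by rewrite /dact /= => ->.
exists (slice_contraction s F); split.
- apply: continuous_homotopy_on_cat => [x Ux||].
  + by rewrite homotopy_cat1 homotopy_rev1 F0.
  + apply: continuous_homotopy_on_cat => [x Ux||].
    * by rewrite homotopy_rev1 homotopy_rev0 F0.
    * apply/continuous_homotopy_on_rev.
      apply: (continuous_homotopy_on_comp _ snd _ _ cFz).
      by move=> q; exact: cvg_snd.
    * exact: continuous_homotopy_on_rev.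
  + apply: (continuous_homotopy_on_comp _ fst _ _ cFz).
    by move=> q; exact: cvg_fst.
- move=> k x t kz.
  apply: (homotopy_cat_natural (slice U) (act A k) (act A k)) => {x t}.
  + apply: (homotopy_cat_natural (slice U));
      apply: (homotopy_rev_natural (slice U)) => y t Uy.
    * by rewrite zk // F_eq.
    * by rewrite zk // s_eq.
  + by move=> y t Uy; rewrite zk // F_eq.
- by move=> x Ux; rewrite /slice_contraction !homotopy_cat0 homotopy_rev0 F1.
- exists z => x Ux; exists (gone gG); first by rewrite /isotropy /= act1.
  by rewrite /slice_contraction homotopy_cat1 F1 // act1.
Qed.

End slice.

Lemma cat_cover_isotropy {R : realType} {G X : topologicalType}
    {gG : topGroup G} (A : gaction gG X) (z : X) (n : nat) :
  tc_cover (R := R) A n -> cat_cover (R := R) A (isotropy A z) n.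
Proof.
move=> [U [HU coverU]]; exists (fun i => slice z (U i)); split.
  move=> i ni; have [oU invU planU] := HU i ni.
  split; first exact: open_slice.
  - exact: slice_invariant.
  - exact: slice_categorical.
by move=> x; have [i ni Ui] := coverU (z, x); exists i.
Qed.

Local Open Scope ereal_scope.

Theorem proposition5p7 (R : realType) (G X : topologicalType) (gG : topGroup G)
  (A : gaction gG X) :
  compact [set: G] -> hausdorff_space G -> hausdorff_space X ->
  G_connected (R := R) A ->
  forall z : X, eqcat (R := R) A (isotropy A z) <= eqTC (R := R) A.
Proof.
move=> _ _ _ _ z; apply: ereal_inf_le_tmp => _ [n tcn <-].
by exists n => //; exact: cat_cover_isotropy.
Qed.
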